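(* Let $m \ge 2$, $n\ge 2$, and for $1 \le i \le m$ let $f_i(x) = x^T A_i x + c_i^T x + d_i$ be quadratics on $\mathbb{R}^n$ with $A_i$ symmetric, where $f_1(x) = \|x\|^2 - 1$ (i.e. $A_1 = I$, $c_1 = 0$, $d_1 = -1$). For $2 \le i \le m$ let $U_i > 0$ satisfy $|f_i(x)| \le U_i$ for all $x$ with $\|x\|^2 \le 2$. Consider the system in the real variables $v_0, x_1,\ldots,x_n, s_1,\ldots,s_m, w_2,\ldots,w_m$: $$(\mathrm{a})\quad x^T A_i x + c_i^T v_0 x + d_i v_0^2 + s_i^2 = 0, \quad 1 \le i \le m,$$ $$(\mathrm{b})\quad \frac{s_i^2 + w_i^2}{U_i} - v_0^2 = 0, \quad 2 \le i \le m,$$ $$(\mathrm{c})\quad \|x\|^2 + s_1^2 + \sum_{i=2}^m \frac{s_i^2 + w_i^2}{U_i} + v_0^2 = m+1.$$ Let $0 \le \delta < 1$ and suppose $\hat z = (\hat v_0, \hat x, \hat s, \hat w)$ is $\delta$-feasible for the equations (a) and (b). Then (i) $$m\hat v_0^2 - m\delta \le \|\hat x\|^2 + \hat s_1^2 + \sum_{i=2}^m \frac{\hat s_i^2 + \hat w_i^2}{U_i} \le m \hat v_0^2 + m\delta;$$ (ii) if $\hat z$ is also $\delta$-feasible for (c), then $1 - \delta \le \hat v_0^2 \le 1 + \delta$.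
   Context: A vector is $\delta$-feasible for an equation $h = 0$ if $|h| \le \delta$ at that vector (i.e. it is $\delta$-feasible for both inequalities $h \le 0$ and $-h \le 0$). *)

From mathcomp Require Import all_boot all_order all_algebra.
Set Implicit Arguments. Unset Strict Implicit. Unset Printing Implicit Defensive.
Import Order.TTheory GRing.Theory Num.Theory.
Local Open Scope ring_scope.

Definition sqnorm (R : realFieldType) (n : nat) (x : 'cV[R]_n) : R :=
  \sum_(j < n) x j 0 ^+ 2.

Definition qform (R : realFieldType) (n : nat) (A : 'M[R]_n) (x : 'cV[R]_n) : R :=
  (x^T *m A *m x) 0 0.

Definition lform (R : realFieldType) (n : nat) (c x : 'cV[R]_n) : R :=
  (c^T *m x) 0 0.

Definition quad (R : realFieldType) (n : nat) (A : 'M[R]_n) (c : 'cV[R]_n) (d : R)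
  (x : 'cV[R]_n) : R := qform A x + lform c x + d.

Definition delta_feasible_eq (R : realFieldType) (delta h : R) : Prop :=
  `|h| <= delta.

(** Summing the [m - 1] equations (b), the weighted slack sum is within
    [(m - 1) delta] of [(m - 1) v0^2]; equation (a) for [i = 1] says
    [||x||^2 + s_1^2] is within [delta] of [v0^2].  Adding the two gives (i).
    For (ii), subtracting (c) from (i) bounds [(m + 1) |1 - v0^2|] by
    [(m + 1) delta]. *)
From mathcomp Require Import all_boot all_order all_algebra.
From mathcomp Require Import ring lra.
Import Order.TTheory GRing.Theory Num.Theory.
Local Open Scope ring_scope.

Lemma qform1 (R : realFieldType) n (x : 'cV[R]_n) : qform 1%:M x = sqnorm x.
Proof.
rewrite /qform /sqnorm mulmx1 mxE; apply: eq_bigr => j _.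
by rewrite mxE expr2.
Qed.

Lemma lform0 (R : realFieldType) n (x : 'cV[R]_n) : lform 0 x = 0.
Proof. by rewrite /lform trmx0 mul0mx mxE. Qed.

Lemma ler_dist_sum_const (R : numDomainType) (a b : nat) (F : nat -> R)
    (v delta : R) :
  (forall i, (a <= i < b)%N -> `|F i - v| <= delta) ->
  `|\sum_(a <= i < b) F i - (b - a)%:R * v| <= (b - a)%:R * delta.
Proof.
move=> Fv; rewrite !mulr_natl -!sumr_const_nat -sumrB.
by rewrite big_nat [X in _ <= X]big_nat (le_trans (ler_norm_sum _ _ _)) ?ler_sum.
Qed.

Lemma ler_norm_pmul2l (R : numDomainType) (k y delta : R) :
  0 < k -> `|k * y| <= k * delta -> `|y| <= delta.
Proof. by move=> k_gt0; rewrite normrM gtr0_norm // ler_pM2l. Qed.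

Theorem lemma1 (R : realFieldType) (m n : nat)
  (A : nat -> 'M[R]_n) (c : nat -> 'cV[R]_n) (d : nat -> R) (U : nat -> R)
  (v0 : R) (x : 'cV[R]_n) (s w : nat -> R) (delta : R) :
  (2 <= m)%N -> (2 <= n)%N ->
  (forall i, (1 <= i <= m)%N -> (A i)^T = A i) ->
  A 1%N = 1%:M -> c 1%N = 0 -> d 1%N = -1 ->
  (forall i, (2 <= i <= m)%N -> 0 < U i) ->
  (forall i, (2 <= i <= m)%N -> forall y : 'cV[R]_n,
      sqnorm y <= 2 -> `|quad (A i) (c i) (d i) y| <= U i) ->
  0 <= delta -> delta < 1 ->
  (* (a) delta-feasible *)
  (forall i, (1 <= i <= m)%N ->
     delta_feasible_eq delta
       (qform (A i) x + v0 * lform (c i) x + d i * v0 ^+ 2 + s i ^+ 2)) ->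
  (* (b) delta-feasible *)
  (forall i, (2 <= i <= m)%N ->
     delta_feasible_eq delta ((s i ^+ 2 + w i ^+ 2) / U i - v0 ^+ 2)) ->
  (* (i) *)
  (m%:R * v0 ^+ 2 - m%:R * delta <=
     sqnorm x + s 1%N ^+ 2 + \sum_(2 <= i < m.+1) (s i ^+ 2 + w i ^+ 2) / U i
   /\ sqnorm x + s 1%N ^+ 2 + \sum_(2 <= i < m.+1) (s i ^+ 2 + w i ^+ 2) / U i
     <= m%:R * v0 ^+ 2 + m%:R * delta)
  /\
  (* (ii) *)
  (delta_feasible_eq delta
     (sqnorm x + s 1%N ^+ 2 + \sum_(2 <= i < m.+1) (s i ^+ 2 + w i ^+ 2) / U i
        + v0 ^+ 2 - (m%:R + 1)) ->
   1 - delta <= v0 ^+ 2 /\ v0 ^+ 2 <= 1 + delta).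
Proof.
move=> m_ge2 _ _ A1 c1 d1 _ _ _ _ feas_a feas_b.
set T := \sum_(2 <= i < m.+1) _; set S := sqnorm x + _ + T.
have first_eq : `|sqnorm x + s 1%N ^+ 2 - v0 ^+ 2| <= delta.
  move: (feas_a 1%N (ltnW m_ge2)).
  by rewrite /delta_feasible_eq A1 c1 d1 qform1 lform0 mulr0 addr0 mulN1r addrAC.
have sum_eq : `|T - (m - 1)%:R * v0 ^+ 2| <= (m - 1)%:R * delta.
  rewrite -subSS; apply: ler_dist_sum_const => i /andP[i_ge2 i_le].
  by apply: feas_b; rewrite i_ge2 -ltnS.
have m_split : m%:R = 1 + (m - 1)%:R :> R.
  by rewrite -[in LHS](subnK (ltnW m_ge2)) natrD addrC.
have part_i : `|S - m%:R * v0 ^+ 2| <= m%:R * delta.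
  rewrite m_split !mulrDl !mul1r.
  have -> : S - (v0 ^+ 2 + (m - 1)%:R * v0 ^+ 2) =
      (sqnorm x + s 1%N ^+ 2 - v0 ^+ 2) + (T - (m - 1)%:R * v0 ^+ 2).
    by rewrite /S; ring.
  exact: le_trans (ler_normD _ _) (lerD first_eq sum_eq).
split; first by move: part_i; rewrite ler_distl; move/andP.
rewrite /delta_feasible_eq => feas_c.
have : `|(m%:R + 1) * (1 - v0 ^+ 2)| <= (m%:R + 1) * delta.
  have -> : (m%:R + 1) * (1 - v0 ^+ 2) =
      (S - m%:R * v0 ^+ 2) - (S + v0 ^+ 2 - (m%:R + 1)) by ring.
  by rewrite mulrDl mul1r (le_trans (ler_normB _ _)) ?lerD.
move/ler_norm_pmul2l => /(_ (ltr_wpDl (ler0n _ _) ltr01)).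
by rewrite ler_distl => /andP[? ?]; split; lra.
Qed.
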